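(* Let $r\geq 1$ and $d>r$ be integers and let $A_1,\dots,A_r$ be fixed positive integers. For each $i$ let $H^{(i)}$ be any one of the sequences (indexed by positive integers $n$) $A_i^{n}n!$, $A_i^{n}n!!$, $A_i^{n}[1,\dots,n]$, $A_i^{n}\,n\#$, or $A_i^{p_n}\,p_n\#$ (the choice may depend on $i$). Then the equation $$x^d=\prod_{i=1}^r H^{(i)}_{n_i}$$ has only finitely many solutions $(x,n_1,\dots,n_r)$ with $x\in\mathbb{Z}$ and $n_1,\dots,n_r$ positive integers.
   Context: $[1,\dots,n]$ is the least common multiple of $1,\dots,n$; $n!!$ is the double factorial; $n\#$ is the product of all primes $\leq n$; $p_n$ is the $n$-th prime and $p_n\#$ is the product of the first $n$ primes. *)

From mathcomp Require Import all_boot all_order all_algebra.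
Set Implicit Arguments. Unset Strict Implicit. Unset Printing Implicit Defensive.

Fixpoint dfact (n : nat) : nat :=
  match n with
  | 0 => 1
  | 1 => 1
  | (m.+2) as k => k * dfact m
  end.

Definition lcm_upto (n : nat) : nat := \big[lcmn/1]_(1 <= i < n.+1) i.

Definition primorial (n : nat) : nat := \prod_(p < n.+1 | prime p) p.

(* smallest prime strictly greater than m (one exists in (m, m`! + 1]) *)
Definition next_prime (m : nat) : nat :=
  let s := [seq k <- iota m.+1 (m`!) | prime k] in head 0 s.

(* p_n, the n-th prime, 1-indexed: p_1 = 2, p_2 = 3, ... (p_0 := 1 unused) *)
Fixpoint nth_prime (n : nat) : nat :=
  match n with
  | 0 => 1
  | m.+1 => next_prime (nth_prime m)
  end.

Inductive seq_kind := KFact | KDFact | KLcm | KPrimorial | KPrimePrimorial.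

Definition H (k : seq_kind) (A n : nat) : nat :=
  match k with
  | KFact => A ^ n * n`!
  | KDFact => A ^ n * dfact n
  | KLcm => A ^ n * lcm_upto n
  | KPrimorial => A ^ n * primorial n
  | KPrimePrimorial => A ^ (nth_prime n) * primorial (nth_prime n)
  end.

From mathcomp Require Import all_boot all_order all_algebra.
From mathcomp Require Import zify.
Set Implicit Arguments. Unset Strict Implicit. Unset Printing Implicit Defensive.

(* Each H^(i)_n is A_i^e times n!, n!!, [1..n], n# or p_n#, in which a prime 2 < p with
   s < 2p occurs exactly once if p <= s and not at all otherwise; the scale s is n, p_n, or n/2
   for n!! with n even.  If the largest scale M of a solution is large, Bertrand's postulate
   (proved by Erdős's argument) yields a prime p in (M/2, M] exceeding every A_i; then v_p of
   the product counts the factors of scale >= p, so it lies in [1, r] and cannot be d v_p(x)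
   with d > r.  Hence the n_i are bounded, and so is x. *)

Section Bertrand.
Local Open Scope nat_scope.

Lemma leq_prod_nat m n (F1 F2 : nat -> nat) :
  (forall i, m <= i < n -> F1 i <= F2 i) ->
  \prod_(m <= i < n) F1 i <= \prod_(m <= i < n) F2 i.
Proof.
move=> le12; rewrite big_nat_cond [X in _ <= X]big_nat_cond.
by apply: leq_prod => i /andP[/le12].
Qed.

Lemma prod_pfactor_logn N M : 0 < N -> (forall p, prime p -> p %| N -> p <= M) ->
  N = \prod_(0 <= p < M.+1) p ^ logn p N.
Proof.
move=> N_gt0 leM.
have e := widen_partn predT (leq_maxl N M); rewrite partnT // in e.
rewrite {1}e (@big_cat_nat _ _ _ M.+1) //=; last by rewrite ltnS leq_maxr.
rewrite [X in _ * X]big1_seq ?muln1 // => p /andP[_].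
rewrite mem_index_iota => /andP[Mp _].
case: (posnP (logn p N)) => [-> //|]; rewrite logn_gt0 mem_primes => /and3P[pp _ pN].
by have := leM _ pp pN; rewrite leqNgt Mp.
Qed.

Lemma prime_dvd_fact_leq p m : prime p -> p %| m`! -> p <= m.
Proof.
move=> pp; elim: m => [|m IHm]; first by rewrite dvdn1 => /eqP p1; rewrite p1 in pp.
rewrite factS Euclid_dvdM // => /orP[/dvdn_leq -> // | /IHm]; lia.
Qed.

Lemma prime_dvd_bin_leq p n m : m <= n -> prime p -> p %| 'C(n, m) -> p <= n.
Proof.
move=> mn pp pC; apply: prime_dvd_fact_leq => //.
by rewrite -(bin_fact mn); apply: dvdn_mulr.
Qed.

Lemma primorialE m : primorial m = \prod_(0 <= p < m.+1) (if prime p then p else 1).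
Proof. by rewrite /primorial -big_mkcond /= big_mkord. Qed.

Lemma bin_mid_odd_ub k : 'C(2 * k + 1, k) <= 4 ^ k.
Proof.
have sum_bin : \sum_(0 <= i < (2 * k + 1).+1) 'C(2 * k + 1, i) = 2 ^ (2 * k + 1).
  transitivity ((1 + 1) ^ (2 * k + 1)); last by [].
  by rewrite big_mkord expnDn; apply: eq_bigr => i _; rewrite !exp1n !muln1.
have k_lt : k < (2 * k + 1).+1 by lia.
have k1_lt : k.+1 < (2 * k + 1).+1 by lia.
rewrite (@big_cat_nat _ _ _ k) //= ?(big_ltn k_lt) ?(big_ltn k1_lt) in sum_bin; last by lia.
have binS : 'C(2 * k + 1, k.+1) = 'C(2 * k + 1, k).
  by rewrite -[in RHS]bin_sub; [congr 'C(_, _); lia | lia].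
rewrite binS in sum_bin.
have : 2 * 'C(2 * k + 1, k) <= 2 ^ (2 * k + 1) by rewrite -sum_bin; lia.
by rewrite expnD expnM mulnC leq_pmul2r.
Qed.

Lemma leq_prod_subrange (F : nat -> nat) a b c d :
  (forall i, 0 < F i) -> a <= b -> b <= c -> c <= d ->
  \prod_(b <= i < c) F i <= \prod_(a <= i < d) F i.
Proof.
move=> F_gt0 ab bc cd.
rewrite (@big_cat_nat _ _ _ b a d) ?(leq_trans bc cd) // (@big_cat_nat _ _ _ c b d) //=.
rewrite mulnA mulnC mulnA; apply: leq_pmull.
by rewrite muln_gt0 !prodn_gt0.
Qed.

(* Every prime in (k+1, 2k+1] divides (2k+1)! but neither k! nor (k+1)!. *)
Lemma prod_primes_mid_le_bin k :
  \prod_(k.+2 <= p < (2 * k + 1).+1) (if prime p then p else 1) <= 'C(2 * k + 1, k).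
Proof.
set c := 'C(2 * k + 1, k).
have c_gt0 : 0 < c by rewrite bin_gt0; lia.
have k_le : k <= 2 * k + 1 by lia.
rewrite [X in _ <= X](prod_pfactor_logn c_gt0 (fun p pp => prime_dvd_bin_leq k_le pp)).
have k2_le : k.+2 <= (2 * k + 1).+1 by lia.
apply: leq_trans (leq_prod_subrange (fun p => pfactor_gt0 p c) (leq0n _) k2_le (leqnn _)).
apply: leq_prod_nat => p /andP[kp p_le].
case: ifP => pp; last exact: pfactor_gt0.
have pc : p %| c.
  have : p %| (2 * k + 1)`! by apply: dvdn_fact; lia.
  by rewrite -(bin_fact k_le) !Euclid_dvdM // -/c => /orP[// | /orP[]]
    /(prime_dvd_fact_leq pp); lia.
have : 0 < logn p c by rewrite logn_gt0 mem_primes pp c_gt0.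
by case: (logn p c) => // l _; rewrite expnS leq_pmulr // expn_gt0 prime_gt0.
Qed.

Lemma primorial_ub m : primorial m <= 4 ^ m.
Proof.
elim/ltn_ind: m => m IHm.
case: (leqP m 2) => [m_le2 | m_gt2].
  rewrite primorialE.
  by case: m m_le2 {IHm} => [|[|[|]]] // _; rewrite !big_nat_recr //= big_geq.
case: (boolP (odd m)) => m_odd.
  have [k m_eq] : exists k, m = 2 * k + 1.
    by exists m./2; rewrite -{1}(odd_double_half m) m_odd; lia.
  subst m.
  rewrite primorialE (@big_cat_nat _ _ _ k.+2) //=; last by lia.
  rewrite -(primorialE k.+1) (_ : 4 ^ (2 * k + 1) = 4 ^ k.+1 * 4 ^ k); last first.
    by rewrite -expnD; congr (_ ^ _); lia.
  apply: leq_mul; first by apply: IHm; lia.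
  exact: leq_trans (prod_primes_mid_le_bin k) (bin_mid_odd_ub k).
have [m' m_eq] : exists m', m = m'.+1 by exists m.-1; lia.
have m_nprime : prime m = false.
  by apply/negbTE/negP => /even_prime[]; [lia | rewrite (negbTE m_odd)].
rewrite primorialE m_eq big_nat_recr //= -(primorialE m') -m_eq m_nprime muln1.
by apply: leq_trans (IHm m' _) _; [lia | rewrite leq_exp2l; lia].
Qed.

Lemma central_bin_lb n : 4 ^ n <= (2 * n).+1 * 'C(2 * n, n).
Proof.
elim: n => [|n IHn] //.
have e1 := mul_bin_diag (2 * n.+1) n.
have e2 := mul_bin_down (2 * n).+1 n.
rewrite (_ : (2 * n.+1).-1 = (2 * n).+1) in e1; last by lia.
rewrite /= (_ : (2 * n).+1 - n = n.+1) in e2; last by lia.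
rewrite expnS.
set c := 'C(2 * n, n) in IHn e2 *; set c1 := 'C((2 * n).+1, n) in e1 e2.
set c2 := 'C(2 * n.+1, n.+1) in e1 *.
nia.
Qed.

(* The k-th term of Legendre's formula for the p-adic valuation of 'C(2n, n). *)
Definition central_bin_term n p k := (2 * n) %/ p ^ k - 2 * (n %/ p ^ k).

Lemma double_divn_bounds n m : 0 < m -> 2 * (n %/ m) <= (2 * n) %/ m <= 2 * (n %/ m) + 1.
Proof.
move=> m_gt0; apply/andP; split.
  by rewrite leq_divRL // -mulnA leq_mul2l leq_divM orbT.
by rewrite -ltnS ltn_divLR //; have := ltn_ceil n m_gt0; nia.
Qed.

Lemma central_bin_term_le1 n p k : 0 < p -> central_bin_term n p k <= 1.
Proof.
move=> p_gt0; have pk_gt0 : 0 < p ^ k by rewrite expn_gt0 p_gt0.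
by have := double_divn_bounds n pk_gt0; rewrite /central_bin_term; lia.
Qed.

Lemma central_bin_term_eq0 n p k : 2 * n < p ^ k -> central_bin_term n p k = 0.
Proof. by move=> lt; rewrite /central_bin_term !divn_small //; lia. Qed.

Lemma logn_central_bin p n : prime p ->
  logn p 'C(2 * n, n) = \sum_(1 <= k < (2 * n).+1) central_bin_term n p k.
Proof.
move=> pp; have p_gt1 := prime_gt1 pp.
have n_le : n <= 2 * n by lia.
have fact_eq := bin_fact n_le; rewrite (_ : 2 * n - n = n) in fact_eq; last by lia.
have := congr1 (logn p) fact_eq.
rewrite lognM ?muln_gt0 ?fact_gt0 ?bin_gt0 // lognM ?fact_gt0 // !logn_fact //.
have -> : \sum_(1 <= k < n.+1) n %/ p ^ k = \sum_(1 <= k < (2 * n).+1) n %/ p ^ k.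
  have n_lt : n.+1 <= (2 * n).+1 by lia.
  rewrite [RHS](@big_cat_nat _ _ _ n.+1) //=.
  rewrite [X in _ = _ + X]big1_seq ?addn0 // => k /andP[_].
  rewrite mem_index_iota => /andP[nk _]; rewrite divn_small //.
  by apply: leq_trans (ltn_expl k p_gt1); lia.
have -> : \sum_(1 <= k < (2 * n).+1) (2 * n) %/ p ^ k =
    \sum_(1 <= k < (2 * n).+1) central_bin_term n p k +
    \sum_(1 <= k < (2 * n).+1) 2 * (n %/ p ^ k).
  rewrite -big_split /=; apply: eq_bigr => k _; rewrite /central_bin_term subnK //.
  have pk_gt0 : 0 < p ^ k by rewrite expn_gt0 prime_gt0.
  by have /andP[] := double_divn_bounds n pk_gt0.
by rewrite -big_distrr /=; lia.
Qed.

Lemma pfactor_logn_central_bin_le p n : prime p -> 0 < n ->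
  p ^ logn p 'C(2 * n, n) <= 2 * n.
Proof.
move=> pp n_gt0; have p_gt1 := prime_gt1 pp.
set L := trunc_log p (2 * n).
have pL_le : p ^ L <= 2 * n by apply: trunc_logP; lia.
have pL_gt : 2 * n < p ^ L.+1 by apply: trunc_log_ltn.
have L_lt : L.+1 <= (2 * n).+1 by rewrite ltnS (leq_trans (ltnW (ltn_expl L p_gt1))).
apply: leq_trans pL_le; rewrite leq_exp2l // logn_central_bin //.
rewrite (@big_cat_nat _ _ _ L.+1) //=.
rewrite [X in _ + X]big1_seq ?addn0; last first.
  move=> k /andP[_]; rewrite mem_index_iota => /andP[Lk _]; apply: central_bin_term_eq0.
  by apply: leq_trans pL_gt _; rewrite leq_exp2l.
apply: (@leq_trans (\sum_(1 <= k < L.+1) 1)); last by rewrite sum_nat_const_nat; lia.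
by apply: leq_sum => k _; apply: central_bin_term_le1; lia.
Qed.

Lemma logn_central_bin_sqrt_lt p n : prime p -> 0 < n -> 2 * n < p * p ->
  logn p 'C(2 * n, n) = central_bin_term n p 1.
Proof.
move=> pp n_gt0 lt_pp; have p_gt1 := prime_gt1 pp.
rewrite logn_central_bin // big_ltn; last by lia.
rewrite big1_seq ?addn0 // => k /andP[_]; rewrite mem_index_iota => /andP[k_gt1 _].
apply: central_bin_term_eq0; apply: leq_trans lt_pp _.
by rewrite mulnn leq_exp2l.
Qed.

Lemma divn_between x p q : q * p <= x < q.+1 * p -> x %/ p = q.
Proof.
case: p => [|p]; first by rewrite !muln0.
by move=> /andP[le lt]; apply/eqP; rewrite eqn_leq -ltnS ltn_divLR // leq_divRL // le lt.
Qed.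

Lemma logn_central_bin_mid p n : prime p -> 2 * n < p * p -> p <= n -> 2 * n < 3 * p ->
  logn p 'C(2 * n, n) = 0.
Proof.
move=> pp lt_pp p_le lt_3p; have p_gt1 := prime_gt1 pp.
rewrite logn_central_bin_sqrt_lt //; last by lia.
rewrite /central_bin_term expn1 (@divn_between _ _ 2) ?(@divn_between _ _ 1); lia.
Qed.

(* Erdős: primes p <= sqrt(2n) contribute at most 2n each, larger ones appear at most once,
   and those in (2n/3, n] not at all. *)
Lemma pfactor_logn_central_bin_le_no_prime n t p : prime p -> 0 < n ->
  2 * n < t.+1 * t.+1 -> (forall q, prime q -> n < q -> 2 * n < q) -> p <= 2 * n ->
  p ^ logn p 'C(2 * n, n) <=
    (if p < t.+1 then 2 * n else 1) * (if 3 * p <= 2 * n then p else 1).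
Proof.
move=> pp n_gt0 lt_t no_prime p_le; have p_gt1 := prime_gt1 pp.
case: (ltnP p t.+1) => [p_le_t | t_lt_p].
  apply: leq_trans (pfactor_logn_central_bin_le pp n_gt0) _.
  by case: ifP => _; rewrite ?muln1 // leq_pmulr; lia.
have lt_pp : 2 * n < p * p by nia.
rewrite mul1n; case: (leqP (3 * p) (2 * n)) => [le_3p | lt_3p].
  rewrite logn_central_bin_sqrt_lt //.
  have := central_bin_term_le1 n 1 (ltnW p_gt1).
  by case: (central_bin_term n p 1) => [|[|]] // _; rewrite ?expn0 ?expn1 ?prime_gt0.
rewrite logn_central_bin_mid //.
by case: (leqP p n) => // n_lt; have := no_prime _ pp n_lt; lia.
Qed.

Lemma central_bin_le_no_prime n t : 0 < n -> t * t <= 2 * n < t.+1 * t.+1 ->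
  (forall q, prime q -> n < q -> 2 * n < q) ->
  'C(2 * n, n) <= (2 * n) ^ t.+1 * primorial ((2 * n) %/ 3).
Proof.
move=> n_gt0 /andP[t_le lt_t] no_prime.
have n_le : n <= 2 * n by lia.
have C_gt0 : 0 < 'C(2 * n, n) by rewrite bin_gt0.
rewrite [X in X <= _](prod_pfactor_logn C_gt0 (fun p pp => prime_dvd_bin_leq n_le pp)).
apply: (@leq_trans (\prod_(0 <= p < (2 * n).+1)
    ((if p < t.+1 then 2 * n else 1) * (if prime p && (3 * p <= 2 * n) then p else 1)))).
  apply: leq_prod_nat => p /andP[_ p_lt].
  case: (boolP (prime p)) => pp; last by rewrite lognE (negbTE pp) /= muln1; case: ifP; lia.
  exact: pfactor_logn_central_bin_le_no_prime.
rewrite big_split /=; apply: leq_mul.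
  have t_lt : t.+1 <= (2 * n).+1 by nia.
  rewrite (@big_cat_nat _ _ _ t.+1) //= [X in _ * X]big1_seq ?muln1; last first.
    by move=> i /andP[_]; rewrite mem_index_iota => /andP[t_le_i _]; rewrite ltnNge t_le_i.
  rewrite (eq_big_nat _ _ (F2 := fun _ => 2 * n)) ?prod_nat_const_nat ?subn0 //.
  by move=> i /andP[_ ->].
have q_lt : ((2 * n) %/ 3).+1 <= (2 * n).+1 by lia.
rewrite (@big_cat_nat _ _ _ ((2 * n) %/ 3).+1) //= [X in _ * X]big1_seq ?muln1.
  rewrite primorialE; apply: leq_prod_nat => i /andP[_ i_lt].
  by rewrite (_ : 3 * i <= 2 * n) ?andbT //; lia.
move=> i /andP[_]; rewrite mem_index_iota => /andP[i_ge _].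
by rewrite (_ : 3 * i <= 2 * n = false) ?andbF //; lia.
Qed.

Lemma exists_sqrtn N : exists t, t * t <= N < t.+1 * t.+1.
Proof.
elim: N => [|N [t /andP[le lt]]]; first by exists 0.
case: (leqP (t.+1 * t.+1) N.+1) => h; [exists t.+1 | exists t]; nia.
Qed.

Lemma pow6_succ_le_double t : 8 <= t -> t.+2 ^ 6 <= 2 * t.+1 ^ 6.
Proof.
move=> t_ge8.
have sq : 4 * t.+2 ^ 2 <= 5 * t.+1 ^ 2 by rewrite !expnS !expn0; nia.
have : (4 * t.+2 ^ 2) ^ 3 <= (5 * t.+1 ^ 2) ^ 3 by rewrite leq_exp2r.
rewrite !expnMn -!expnD; move: (t.+2 ^ _) (t.+1 ^ _) => a b.
by rewrite (_ : 4 ^ 3 = 64) // (_ : 5 ^ 3 = 125) //; lia.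
Qed.

Lemma pow6_le_pow2 t : 63 <= t -> t.+1 ^ 6 <= 2 ^ (t - 3).
Proof.
move=> t_ge; have [s ->] : exists s, t = s + 63 by exists (t - 63); lia.
elim: s => [|s IHs].
  rewrite (_ : (0 + 63).+1 = 2 ^ 6); last by [].
  by rewrite -expnM leq_exp2l.
rewrite (_ : s.+1 + 63 - 3 = (s + 63 - 3).+1); last by lia.
rewrite [2 ^ _.+1]expnS (_ : (s.+1 + 63).+1 = (s + 63).+2); last by lia.
by apply: leq_trans (pow6_succ_le_double _) _; [lia | rewrite leq_mul2l IHs].
Qed.

(* With t ~ sqrt(2n), the right-hand side is 2^O(sqrt n log n) * 4^(2n/3), too small. *)
Lemma central_bin_bound_absurd n t q : 2048 <= n -> t * t <= 2 * n < t.+1 * t.+1 ->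
  3 * q <= 2 * n -> ~ 4 ^ n <= (2 * n).+1 * (2 * n) ^ t.+1 * 4 ^ q.
Proof.
move=> n_ge /andP[t_le lt_t] q_le le4n.
have t_ge : 63 <= t by nia.
set X := (2 * n).+1 * (2 * n) ^ t.+1 in le4n.
have X_le : X <= (2 * n).+1 ^ t.+2.
  by rewrite /X [(2 * n).+1 ^ _]expnS leq_mul2l leq_exp2r // leqnSn orbT.
have le4n_X3 : 4 ^ n <= X ^ 3.
  have cube : (4 ^ n) ^ 3 <= X ^ 3 * (4 ^ q) ^ 3 by rewrite -expnMn leq_exp2r.
  have cube4n : (4 ^ n) ^ 3 = 4 ^ n * 4 ^ (2 * n).
    by rewrite -expnM -expnD; congr (_ ^ _); lia.
  have cube4q : (4 ^ q) ^ 3 <= 4 ^ (2 * n) by rewrite -expnM leq_exp2l //; lia.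
  have := leq_trans cube (leq_mul (leqnn (X ^ 3)) cube4q).
  by rewrite cube4n leq_pmul2r // expn_gt0.
have X3_le : X ^ 3 <= t.+1 ^ (6 * t.+2).
  apply: leq_trans (_ : ((2 * n).+1 ^ t.+2) ^ 3 <= _); first by rewrite leq_exp2r.
  by rewrite -expnM (_ : 6 * t.+2 = 2 * (t.+2 * 3)) ?expnM ?leq_exp2r //; lia.
have t_pow : t.+1 ^ (6 * t.+2) <= 2 ^ ((t - 3) * t.+2).
  by rewrite expnM [2 ^ _]expnM leq_exp2r // pow6_le_pow2.
have tt_le : 2 ^ (t * t) <= 4 ^ n by rewrite (_ : 4 = 2 ^ 2) // -expnM leq_exp2l //; lia.
have := leq_trans tt_le (leq_trans le4n_X3 (leq_trans X3_le t_pow)).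
by rewrite leq_exp2l //; nia.
Qed.

Lemma bertrand n : 2048 <= n -> exists2 p, prime p & n < p <= 2 * n.
Proof.
move=> n_ge.
have [/existsP[p /andP[pp n_lt]] | no_prime] :=
  boolP [exists p : 'I_(2 * n).+1, prime p && (n < p)].
  by exists p; rewrite // n_lt -ltnS ltn_ord.
have {}no_prime q : prime q -> n < q -> 2 * n < q.
  move=> qp n_lt; rewrite ltnNge; apply/negP => q_le.
  by move/existsP: no_prime; apply; exists (Ordinal (q_le : q < (2 * n).+1)); rewrite qp.
have [t t_bounds] := exists_sqrtn (2 * n).
have third_le : 3 * ((2 * n) %/ 3) <= 2 * n by lia.
apply: False_ind; apply: (central_bin_bound_absurd n_ge t_bounds third_le).
apply: leq_trans (central_bin_lb n) _; rewrite -mulnA leq_mul2l; apply/orP; right.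
apply: leq_trans (central_bin_le_no_prime _ t_bounds no_prime) _; first by lia.
by rewrite leq_mul2l primorial_ub orbT.
Qed.

End Bertrand.

Lemma dfact_gt0 n : 0 < dfact n.
Proof. by elim/ltn_ind: n => -[|[|m]] IH //=; rewrite muln_gt0 IH. Qed.

Section Valuations.
Local Open Scope nat_scope.
Variable p : nat.
Hypothesis p_prime : prime p.

Lemma logn_lt_double k : 0 < k < 2 * p -> logn p k = (k == p).
Proof.
move=> /andP[k_gt0 k_lt].
case: (eqVneq k p) => [-> | k_neq]; first by rewrite logn_prime ?eqxx.
rewrite lognE p_prime k_gt0 /=; case: ifP => // /dvdnP[j j_eq].
have p_gt1 := prime_gt1 p_prime; subst k.
have j1 : j = 1 by nia.
by rewrite j1 mul1n eqxx in k_neq.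
Qed.

Lemma logn_fact_lt_double n : n < 2 * p -> logn p n`! = (p <= n).
Proof.
elim: n => [|n IHn] n_lt; first by rewrite logn1; have := prime_gt1 p_prime; lia.
rewrite factS lognM ?fact_gt0 // IHn ?logn_lt_double; lia.
Qed.

Hypothesis p_gt2 : 2 < p.

Lemma logn_dfact_odd a : 2 * a + 1 < 2 * p -> logn p (dfact (2 * a + 1)) = (p <= 2 * a + 1).
Proof.
have p_odd : odd p by case: (even_prime p_prime) => [p2 | //]; lia.
elim: a => [|a IHa] lt; first by rewrite /= logn1; lia.
rewrite (_ : 2 * a.+1 + 1 = (2 * a + 1).+2) /=; last by lia.
rewrite lognM ?dfact_gt0 // IHa ?logn_lt_double; [|lia..].
by case: (eqVneq (2 * a + 1).+2 p); [move=> <-; lia | lia].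
Qed.

Lemma logn_dfact_even a : a < 2 * p -> logn p (dfact (2 * a)) = (p <= a).
Proof.
elim: a => [|a IHa] lt; first by rewrite /= logn1; lia.
rewrite (_ : 2 * a.+1 = (2 * a).+2) /=; last by lia.
rewrite lognM ?dfact_gt0 // IHa; last by lia.
rewrite (_ : (2 * a).+2 = 2 * a.+1) ?lognM //; last by lia.
by rewrite !logn_lt_double; lia.
Qed.

End Valuations.

Lemma lcm_upto_gt0 n : 0 < lcm_upto n.
Proof.
elim: n => [|n IHn]; first by rewrite /lcm_upto big_geq.
by rewrite /lcm_upto big_nat_recr //= lcmn_gt0 IHn.
Qed.

Lemma logn_lcm_upto p n : prime p -> n < 2 * p -> logn p (lcm_upto n) = (p <= n).
Proof.
move=> pp; have p_gt1 := prime_gt1 pp.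
elim: n => [|n IHn] n_lt; first by rewrite /lcm_upto big_geq // logn1; lia.
rewrite /lcm_upto big_nat_recr //= logn_lcm ?lcm_upto_gt0 // IHn ?logn_lt_double; lia.
Qed.

Lemma primorial_gt0 n : 0 < primorial n.
Proof. by rewrite prodn_cond_gt0 // => p /prime_gt0. Qed.

Lemma logn_primorial p n : prime p -> logn p (primorial n) = (p <= n).
Proof.
move=> pp; have p_gt1 := prime_gt1 pp.
elim: n => [|n IHn]; first by rewrite primorialE big_nat1 logn1; lia.
rewrite [primorial _]primorialE big_nat_recr //= -primorialE.
case: (boolP (prime n.+1)) => [qp | qnp].
  by rewrite lognM ?primorial_gt0 ?prime_gt0 // IHn logn_prime //; case: eqP; lia.
rewrite muln1 IHn; case: (eqVneq p n.+1) => [pq | ]; [by rewrite -pq pp in qnp | lia].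
Qed.

Lemma next_primeP m : 0 < m -> prime (next_prime m) /\ m < next_prime m.
Proof.
move=> m_gt0; set q := pdiv m`!.+1.
have q_prime : prime q by apply: pdiv_prime; rewrite ltnS fact_gt0.
have q_dvd : q %| m`!.+1 := pdiv_dvd _.
have m_lt : m < q.
  rewrite ltnNge; apply/negP => q_le.
  have q_dvd_fact : q %| m`! by apply: dvdn_fact; rewrite prime_gt0.
  by move: q_dvd; rewrite -addn1 dvdn_addr // dvdn1 => /eqP q1; rewrite q1 in q_prime.
have q_in : q \in [seq k <- iota m.+1 m`! | prime k].
  have := dvdn_leq (ltn0Sn _) q_dvd.
  by rewrite mem_filter q_prime mem_iota m_lt /=; lia.
have memP y : y \in [seq k <- iota m.+1 m`! | prime k] -> prime y /\ m < y.
  by rewrite mem_filter mem_iota => /andP[y_prime /andP[m_lt_y _]].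
rewrite /next_prime; move: q_in memP.
by case: [seq k <- _ | _] => [// | y s] _ /(_ y (mem_head _ _)).
Qed.

Lemma nth_prime_gt0 n : 0 < nth_prime n.
Proof. by elim: n => //= n IHn; apply: prime_gt0; case: (next_primeP IHn). Qed.

Lemma leq_nth_prime n : n <= nth_prime n.
Proof. by elim: n => //= n IHn; case: (next_primeP (nth_prime_gt0 n)); lia. Qed.

(* For even n, n!! = 2^(n/2) (n/2)!, so its odd prime factors are those of (n/2)!. *)
Definition H_scale (k : seq_kind) (n : nat) : nat :=
  match k with
  | KDFact => if odd n then n else n./2
  | KPrimePrimorial => nth_prime n
  | _ => n
  end.

Lemma leq_H_scale k n : n <= 2 * H_scale k n + 1.
Proof.
case: k => /=; try lia; last by have := leq_nth_prime n; lia.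
by case: ifP => n_odd; [lia | rewrite -{1}(odd_double_half n) n_odd; lia].
Qed.

Lemma H_gt0 k A n : 0 < A -> 0 < H k A n.
Proof.
move=> A_gt0; case: k;
  by rewrite /= muln_gt0 expn_gt0 A_gt0 ?fact_gt0 ?dfact_gt0 ?lcm_upto_gt0 ?primorial_gt0.
Qed.

Lemma logn_H p k A n : prime p -> 2 < p -> 0 < A < p -> H_scale k n < 2 * p ->
  logn p (H k A n) = (p <= H_scale k n).
Proof.
move=> pp p_gt2 /andP[A_gt0 A_lt] lt_2p.
have coprime_pA e : coprime p (A ^ e).
  by rewrite coprimeXr // prime_coprime //; apply/negP => /(dvdn_leq A_gt0); lia.
case: k lt_2p => /= lt_2p; rewrite logn_Gauss //.
- exact: logn_fact_lt_double.
- case: ifP lt_2p => n_odd lt_2p.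
    by rewrite -(odd_double_half n) n_odd add1n -addn1 -muln2 mulnC logn_dfact_odd //; lia.
  by rewrite -(odd_double_half n) n_odd add0n -muln2 mulnC logn_dfact_even //; lia.
- exact: logn_lcm_upto.
- exact: logn_primorial.
- exact: logn_primorial.
Qed.

Lemma logn_prod (I : Type) (s : seq I) (P : pred I) (F : I -> nat) p :
  (forall i, P i -> 0 < F i) ->
  logn p (\prod_(i <- s | P i) F i) = \sum_(i <- s | P i) logn p (F i).
Proof.
move=> F_gt0; elim: s => [|i s IHs]; first by rewrite !big_nil logn1.
rewrite !big_cons; case: ifP => // Pi.
by rewrite lognM ?IHs // ?F_gt0 // prodn_cond_gt0.
Qed.

Section ScaleBound.
Variables (r d : nat) (A : 'I_r -> nat) (K : 'I_r -> seq_kind).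
Hypotheses (r_lt_d : r < d) (A_gt0 : forall i, 0 < A i).

Lemma H_scale_bounded a (n : 'I_r -> nat) :
  a ^ d = \prod_(i < r) H (K i) (A i) (n i) ->
  forall i, H_scale (K i) (n i) <= 2 * (2048 + \max_(j < r) A j) + 1.
Proof.
move=> a_eq i; set M := \max_(j < r) H_scale (K j) (n j).
apply: leq_trans (leq_bigmax (F := fun j => H_scale (K j) (n j)) i) _.
rewrite -/M leqNgt; apply/negP => M_gt.
have M_half_ge : 2048 <= M./2 by lia.
have [p pp /andP[M_lt p_le]] := bertrand M_half_ge.
have A_lt j : 0 < A j < p.
  by rewrite A_gt0; have : A j <= \max_(j < r) A j := leq_bigmax j; lia.
have scale_lt j : H_scale (K j) (n j) < 2 * p.
  by have : H_scale (K j) (n j) <= M := leq_bigmax j; lia.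
have v_eq : d * logn p a = \sum_(j < r) (p <= H_scale (K j) (n j)).
  rewrite -lognX a_eq logn_prod; last by move=> j _; apply: H_gt0.
  by apply: eq_bigr => j _; rewrite logn_H //; lia.
have v_le : \sum_(j < r) (p <= H_scale (K j) (n j)) <= r.
  apply: leq_trans (_ : \sum_(j < r) 1 <= r); first by apply: leq_sum => j _; apply: leq_b1.
  by rewrite sum1_card card_ord.
have r_gt0 : 0 < #|'I_r| by apply/card_gt0P; exists i.
have [j0 M_eq] := eq_bigmax (fun j => H_scale (K j) (n j)) r_gt0.
have v_ge : 0 < \sum_(j < r) (p <= H_scale (K j) (n j)).
  by rewrite (bigD1 j0) //= -M_eq -/M; lia.
by move: v_ge v_le; rewrite -v_eq; case: (logn p a) => [|v]; nia.
Qed.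
End ScaleBound.

Local Open Scope ring_scope.

Theorem theorem6 (r d : nat) (hr : (1 <= r)%N) (hd : (r < d)%N)
    (A : 'I_r -> nat) (hA : forall i, (0 < A i)%N) (K : 'I_r -> seq_kind) :
  exists B : nat,
    forall (x : int) (n : 'I_r -> nat),
      (forall i, (0 < n i)%N) ->
      x ^+ d = ((\prod_(i < r) H (K i) (A i) (n i))%N)%:Z ->
      (`|x| <= B)%N /\ (forall i, (n i <= B)%N).
Proof.
set N := (2 * (2 * (2048 + \max_(j < r) A j) + 1) + 1)%N.
pose G i := (\max_(j < N.+1) H (K i) (A i) j)%N.
exists (maxn N (\prod_(i < r) G i)) => x n _ x_eq.
have a_eq : (`|x| ^ d)%N = (\prod_(i < r) H (K i) (A i) (n i))%N.
  by have := congr1 absz x_eq; rewrite abszX absz_nat.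
have n_le i : (n i <= N)%N.
  by apply: leq_trans (leq_H_scale (K i) _) _; have := H_scale_bounded hd hA a_eq i; lia.
split; last by move=> i; apply: leq_trans (n_le i) (leq_maxl _ _).
apply: leq_trans (leq_maxr N _).
have [-> // | x_gt0] := posnP `|x|%N.
apply: (@leq_trans (`|x| ^ d)%N); first by rewrite -{1}(expn1 `|x|%N) leq_pexp2l //; lia.
rewrite a_eq; apply: leq_prod => i _.
have n_lt : (n i < N.+1)%N by rewrite ltnS.
exact: (leq_bigmax (F := fun j : 'I_N.+1 => H (K i) (A i) j) (Ordinal n_lt)).
Qed.
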